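(* Let $n\ge0$, $\alpha\ge1$ be integers, $N=2^{n+1}$, $c=2^\alpha+1$, and consider the $c$-DAG over the uniform dataset $\{0,\dots,N-1\}$ (described in the context). Let $s$ be a real number with $1<s\le N$ and $\kappa=\lfloor\log_2(N/s)\rfloor$. If $2^{n-\kappa}<s\le\frac{c-2}{c-1}2^{n-\kappa+1}$, then for every $x\in[0,N-s]$ the query $Q=[x,x+s)$ satisfies $\mathrm{level}_{c\text{-DAG}}(Q)=\kappa$.
   Context: The $c$-DAG over $\mathcal{D}=\{0,\dots,N-1\}\subset[0,N)$ has levels $\ell=0,\dots,n+1$; with $u_\ell=2^{n-\ell+1}/(c-1)$, its level-$\ell$ nodes are the intervals $[mu_\ell,\,mu_\ell+2^{n-\ell+1})$, $m=0,1,\dots,(c-1)2^\ell-(c-1)$ (a node $[a,a+L)$ has children $[a+jL/(2(c-1)),\,a+jL/(2(c-1))+L/2)$, $j=0,\dots,c-1$). SRC-search returns a node of the deepest level whose interval contains $Q$; $\mathrm{level}_{c\text{-DAG}}(Q)$ is the largest $\ell$ such that some level-$\ell$ node contains $Q$. *)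

From Stdlib Require Import Reals ZArith Lra Lia.
Open Scope R_scope.

(* Level l (0 <= l <= n+1) has node length L_l = 2^(n-l+1) and shift
   u_l = 2^(n-l+1)/(c-1); its nodes are [m*u_l, m*u_l + L_l) for
   m = 0, 1, ..., (c-1)*2^l - (c-1). *)

Definition node_len (n l : nat) : R := 2 ^ (n + 1 - l).
Definition node_shift (n c l : nat) : R := node_len n l / INR (c - 1).

Definition node_left (n c l m : nat) : R := INR m * node_shift n c l.

Definition is_node_index (c l m : nat) : Prop :=
  (m <= (c - 1) * 2 ^ l - (c - 1))%nat.

Definition interval_contains (a L x s : R) : Prop := a <= x /\ x + s <= a + L.

Definition level_has_node (n c l : nat) (x s : R) : Prop :=
  (l <= n + 1)%nat /\
  exists m : nat, is_node_index c l m /\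
    interval_contains (node_left n c l m) (node_len n l) x s.

Definition cdag_level_is (n c : nat) (x s : R) (l : nat) : Prop :=
  level_has_node n c l x s /\
  forall l' : nat, (l < l')%nat -> ~ level_has_node n c l' x s.

Definition floor_log2 (y : R) : Z := Int_part (ln y / ln 2).

(* Level kappa has nodes of length L = 2^(n-kappa+1) with shift u = L/(c-1), and the
   hypothesis on s says exactly 2^(n-kappa) < s <= L - u.  Consecutive level-kappa nodes
   overlap by L - u >= s, and the first and last node reach the ends of [0, N), so every
   window of length s inside [0, N) lies in one of them.  Every deeper level has nodes of
   length at most 2^(n-kappa) < s. *)

From Stdlib Require Import Reals ZArith Lra Lia.
Open Scope R_scope.

Lemma powerRZ2_lt_inv (a b : Z) : powerRZ 2 a < powerRZ 2 b -> (a < b)%Z.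
Proof.
  intros Hab. destruct (Z_lt_le_dec a b) as [|Hba]; [assumption|exfalso].
  rewrite !powerRZ_Rpower in Hab by lra.
  destruct (Zle_lt_or_eq _ _ Hba) as [Hlt| ->]; [|lra].
  apply IZR_lt, (Rpower_lt 2) in Hlt; lra.
Qed.

Lemma exponent_bounds (n : nat) (z : Z) (s r : R) :
  r <= 1 -> 1 < s -> s <= 2 ^ (n + 1) ->
  powerRZ 2 (Z.of_nat n - z) < s ->
  s <= r * powerRZ 2 (Z.of_nat n - z + 1) ->
  (0 <= z <= Z.of_nat n)%Z.
Proof.
  intros Hr Hs1 HsN Hlo Hhi.
  pose proof (powerRZ_lt 2 (Z.of_nat n - z + 1) ltac:(lra)) as Hpos.
  assert (Hz0 : (Z.of_nat n - z < Z.of_nat (n + 1))%Z).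
  { apply powerRZ2_lt_inv. rewrite <- pow_powerRZ. lra. }
  assert (Hzn : (0 < Z.of_nat n - z + 1)%Z).
  { apply powerRZ2_lt_inv. change (powerRZ 2 0) with 1.
    pose proof (Rmult_le_compat_r _ _ _ (Rlt_le _ _ Hpos) Hr). lra. }
  lia.
Qed.

Lemma window_in_shifted_copies (u L s x : R) (M : nat) :
  0 <= x -> s + u <= L -> x + s <= INR M * u + L ->
  exists m : nat, (m <= M)%nat /\ INR m * u <= x /\ x + s <= INR m * u + L.
Proof.
  intros Hx0 Hsu. induction M as [|M IH]; intros Hend.
  - exists 0%nat. simpl in *. split; [lia|lra].
  - destruct (Rle_lt_dec (x + s) (INR M * u + L)) as [Hprev|Hpast].
    + destruct (IH Hprev) as [m [HmM Hm]]. exists m. split; [lia|exact Hm].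
    + exists (S M). rewrite S_INR in *. split; [lia|lra].
Qed.

Lemma last_node_right_end (n c l : nat) :
  (2 <= c)%nat -> (l <= n + 1)%nat ->
  node_left n c l ((c - 1) * 2 ^ l - (c - 1)) + node_len n l = 2 ^ (n + 1).
Proof.
  intros Hc Hl.
  pose proof (Nat.pow_nonzero 2 l ltac:(lia)) as Hpow.
  assert (Hsplit : 2 ^ (n + 1) = 2 ^ l * node_len n l).
  { unfold node_len. rewrite <- pow_add. f_equal. lia. }
  assert (Hc1 : 0 < INR (c - 1)) by (apply lt_0_INR; lia).
  unfold node_left, node_shift.
  rewrite minus_INR by nia. rewrite mult_INR, pow_INR, Hsplit.
  replace (INR 2) with 2 by (simpl; lra).
  field. lra.
Qed.

Lemma level_has_node_intro (n c l : nat) (x s : R) :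
  (2 <= c)%nat -> (l <= n + 1)%nat ->
  0 <= x -> x + s <= 2 ^ (n + 1) ->
  s + node_shift n c l <= node_len n l ->
  level_has_node n c l x s.
Proof.
  intros Hc Hl Hx0 HxN Hs. split; [exact Hl|].
  destruct (window_in_shifted_copies (node_shift n c l) (node_len n l) s x
              ((c - 1) * 2 ^ l - (c - 1)) Hx0 Hs) as [m [HmM Hm]].
  { rewrite <- (last_node_right_end n c l Hc Hl) in HxN. exact HxN. }
  exists m. split; assumption.
Qed.

Lemma level_has_node_len (n c l : nat) (x s : R) :
  level_has_node n c l x s -> s <= node_len n l.
Proof. intros [_ [m [_ [Hl Hr]]]]. lra. Qed.

Lemma node_len_deeper_le (n k l : nat) : (k < l)%nat -> node_len n l <= 2 ^ (n - k).
Proof. intros Hkl. apply Rle_pow; [lra|lia]. Qed.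

Theorem lemma2 (n alpha : nat) (s : R) :
  (1 <= alpha)%nat ->
  let N := (2 ^ (n + 1))%nat in
  let c := (2 ^ alpha + 1)%nat in
  1 < s -> s <= INR N ->
  let kappa := floor_log2 (INR N / s) in
  powerRZ 2 (Z.of_nat n - kappa) < s ->
  s <= (INR c - 2) / (INR c - 1) * powerRZ 2 (Z.of_nat n - kappa + 1) ->
  forall x : R, 0 <= x -> x <= INR N - s ->
  cdag_level_is n c x s (Z.to_nat kappa).
Proof.
  intros _ N c Hs1 HsN kappa Hlo Hhi x Hx0 HxN. clearbody kappa.
  assert (HNpow : INR N = 2 ^ (n + 1)) by (unfold N; rewrite pow_INR; reflexivity).
  assert (Hc : (2 <= c)%nat) by (pose proof (Nat.pow_nonzero 2 alpha); lia).
  assert (Hc1 : INR c - 1 = INR (c - 1)) by (rewrite minus_INR by lia; reflexivity).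
  assert (Hc1pos : 0 < INR (c - 1)) by (apply lt_0_INR; lia).
  assert (Hratio : (INR c - 2) / (INR c - 1) <= 1).
  { rewrite Hc1. replace (INR c - 2) with (INR (c - 1) - 1) by lra.
    unfold Rdiv. rewrite Rmult_minus_distr_r, Rinv_r by lra.
    pose proof (Rinv_0_lt_compat _ Hc1pos). lra. }
  destruct (exponent_bounds n kappa s _ Hratio Hs1 ltac:(lra) Hlo Hhi) as [Hk0 Hkn].
  set (k := Z.to_nat kappa). replace kappa with (Z.of_nat k) in * by lia.
  rewrite <- Nat2Z.inj_sub, <- pow_powerRZ in Hlo by lia.
  replace (Z.of_nat n - Z.of_nat k + 1)%Z with (Z.of_nat (n + 1 - k)) in Hhi by lia.
  rewrite <- pow_powerRZ in Hhi. fold (node_len n k) in Hhi.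
  split.
  - apply level_has_node_intro; [exact Hc|lia|exact Hx0|lra|].
    unfold node_shift. rewrite <- Hc1.
    apply (Rle_trans _ _ _ (Rplus_le_compat_r _ _ _ Hhi)).
    right. field. lra.
  - intros l Hkl Hl.
    pose proof (level_has_node_len _ _ _ _ _ Hl).
    pose proof (node_len_deeper_le n k l Hkl).
    lra.
Qed.
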